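(* Let $G$ be a graph, $k$ a positive integer, $P$ a non-trivial prime graph in a split decomposition of $G$, and $(T,\delta)$ a branch decomposition of $G$ of sm-width less than $k$. For every heavy pair $a,b$ in $P$ (with respect to $k$) there is a cut $(X,Y)$ of $G$ induced by an edge of $T$ such that $\operatorname{tot}^{-1}(X:P)=\{a,b\}$ and $|N_G(X)|<k$.
   Context: Graphs are finite, simple, undirected; $\overline{A}=V(G)\setminus A$; $N(S)=N_G(S)=(\bigcup_{v\in S}N(v))\setminus S$. A split of a connected graph $G$ is a partition $(V_1,V_2)$ of $V(G)$ with $|V_1|,|V_2|\ge2$ such that every vertex of $V_1$ with a neighbour in $V_2$ has the same neighbourhood in $V_2$. $\operatorname{mm}(A)$ is the maximum size of a matching among edges between $A$ and $\overline A$; $\operatorname{sm}(A)=1$ if $(A,\overline A)$ is a split, else $\operatorname{mm}(A)$. A branch decomposition $(T,\delta)$: tree of max degree 3 and bijection $\delta$ from leaves to $V(G)$; each edge of $T$ induces the cut given by leaf-images of the two components of $T-e$; its sm-width is the max of $\operatorname{sm}$ over induced cuts. Split decomposition: decomposing along a split $(V_1,V_2)$ gives $G[V_1]$ plus a new marker adjacent to $N_G(V_2)$ and $G[V_2]$ plus the same marker adjacent to $N_G(V_1)$; prime = no split; non-trivial = more than 3 vertices; recursively decomposing until all parts are prime gives a split decomposition, with tree having prime graphs as nodes adjacent iff sharing a marker. For $v\in V(G_i)$: $\operatorname{tot}(v:G_i)=\{v\}$ if $v\in V(G)$, else (marker shared with $G_j$) the vertices of $V(G)$ in prime graphs of the component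 of the tree minus $G_i$ containing $G_j$; $\operatorname{tot}(V':G_i)=\bigcup_{v\in V'}\operatorname{tot}(v:G_i)$. For $S\subseteq V(G)$, $\operatorname{tot}^{-1}(S:G_i)$ is the minimal $V'\subseteq V(G_i)$ with $S\subseteq\operatorname{tot}(V':G_i)$. $\operatorname{act}(v:G_i)=N_G(V(G)\setminus\operatorname{tot}(v:G_i))$. With respect to $k$, adjacent $a,b\in V(G_i)$ form a heavy pair if $|\operatorname{act}(a:G_i)|\ge3k$ and $|\operatorname{act}(b:G_i)|\ge3k$. *)

From mathcomp Require Import all_boot.
Set Implicit Arguments. Unset Strict Implicit. Unset Printing Implicit Defensive.

(* A simple graph: vertex type V : finType, adjacency e : rel V
   (symmetric, irreflexive -- assumed as hypotheses in the theorem). *)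

Definition Nbhd (V : finType) (e : rel V) (S : {set V}) : {set V} :=
  [set y | [exists x in S, e x y]] :\: S.

Definition connected_on (T : finType) (Vs : {set T}) (e : rel T) : bool :=
  [forall x in Vs, forall y in Vs,
    connect (fun u w => [&& u \in Vs, w \in Vs & e u w]) x y].

Definition is_split (T : finType) (Vs : {set T}) (e : rel T) (A : {set T}) : bool :=
  [&& A \subset Vs, 2 <= #|A|, 2 <= #|Vs :\: A|, connected_on Vs e &
      [forall x in A, forall x' in A,
        ([exists y in Vs :\: A, e x y] && [exists y in Vs :\: A, e x' y]) ==>
        ([set y in Vs :\: A | e x y] == [set y in Vs :\: A | e x' y])]].

Definition matching_across (V : finType) (e : rel V) (A : {set V})
    (M : {set V * V}) : bool :=
  [forall p in M, [&& p.1 \in A, p.2 \notin A & e p.1 p.2]] &&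
  [forall p in M, forall q in M, (p != q) ==> ((p.1 != q.1) && (p.2 != q.2))].

Definition mm (V : finType) (e : rel V) (A : {set V}) : nat :=
  \max_(M : {set V * V} | matching_across e A M) #|M|.

Definition sm (V : finType) (e : rel V) (A : {set V}) : nat :=
  if is_split setT e A then 1 else mm e A.

Definition acyclic (W : finType) (t : rel W) : Prop :=
  ~ exists s : seq W, [&& uniq s, 2 < size s & cycle t s].

Definition is_tree (W : finType) (t : rel W) : Prop :=
  [/\ symmetric t, irreflexive t, (forall x y, connect t x y) & acyclic t].

Definition deg (W : finType) (t : rel W) (x : W) : nat := #|[set y | t x y]|.

Definition leaf (W : finType) (t : rel W) (x : W) : bool := deg t x == 1.

Definition branch_decomp (V W : finType) (t : rel W) (delta : W -> V) : Prop :=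
  [/\ is_tree t, (forall x, deg t x <= 3),
      {in leaf t &, injective delta} &
      (forall v, exists2 l, leaf t l & delta l = v)].

Definition t_minus (W : finType) (t : rel W) (x y : W) : rel W :=
  fun u w => t u w && ~~ (((u == x) && (w == y)) || ((u == y) && (w == x))).

Definition cut (V W : finType) (t : rel W) (delta : W -> V) (x y : W) : {set V} :=
  [set v | [exists l, [&& leaf t l, delta l == v & connect (t_minus t x y) x l]]].

Definition sm_width_lt (V W : finType) (e : rel V) (t : rel W) (delta : W -> V)
    (k : nat) : Prop :=
  forall x y, t x y -> sm e (cut t delta x y) < k.

(* A graph arising during split decomposition. Each vertex u is identified
   with the set tot(u) of vertices of G it stands for: an original vertex v
   of G is [set v], a marker is the set of vertices of G on its other side.
   (These sets partition V(G), so this identification is injective.) *)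
Record lgraph (V : finType) := LG { lverts : {set {set V}}; ladj : rel {set V} }.

Definition init_lgraph (V : finType) (e : rel V) : lgraph V :=
  LG [set [set v] | v : V] (fun X Y => [exists x in X, exists y in Y, e x y]).

(* decomposing L along the split (A, lverts L \ A): the part on the side A,
   i.e. L[A] plus a new marker adjacent to N_L(lverts L \ A).
   The marker's tot is the union of the tots of the other side. *)
Definition piece (V : finType) (L : lgraph V) (A : {set {set V}}) : lgraph V :=
  let B := lverts L :\: A in
  let m := \bigcup_(Y in B) Y in
  let nb := [set X in A | [exists Y in B, ladj L X Y]] in
  LG (m |: A)
     (fun X Y => if X == m then Y \in nb else if Y == m then X \in nb
                 else [&& X \in A, Y \in A & ladj L X Y]).

Definition lprime (V : finType) (L : lgraph V) : Prop :=
  forall A, ~~ is_split (lverts L) (ladj L) A.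

(* split_decomp L D : D is (the set of prime graphs = nodes of) a split
   decomposition of L, obtained by recursively decomposing along splits
   until all parts are prime. *)
Inductive split_decomp (V : finType) : lgraph V -> (lgraph V -> Prop) -> Prop :=
| sd_prime L : lprime L -> split_decomp L (fun P => P = L)
| sd_split L A D1 D2 :
    is_split (lverts L) (ladj L) A ->
    split_decomp (piece L A) D1 ->
    split_decomp (piece L (lverts L :\: A)) D2 ->
    split_decomp L (fun P => D1 P \/ D2 P).

Definition tot (V : finType) (V' : {set {set V}}) : {set V} := \bigcup_(u in V') u.

Definition is_totinv (V : finType) (P : lgraph V) (S : {set V})
    (V' : {set {set V}}) : bool :=
  minset (fun U : {set {set V}} => (U \subset lverts P) && (S \subset tot U)) V'.

Definition act (V : finType) (e : rel V) (u : {set V}) : {set V} := Nbhd e (~: u).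

Definition heavy_pair (V : finType) (e : rel V) (k : nat) (P : lgraph V)
    (a b : {set V}) : Prop :=
  [/\ a \in lverts P, b \in lverts P, ladj P a b,
      3 * k <= #|act e a| & 3 * k <= #|act e b|].

(* Along every edge ab of a graph of a split decomposition the active vertices
   act(a) and act(b) are completely joined in G, and every split of G has a
   side inside a single vertex of the prime graph P.  So a cut of T of
   sm-width below k either has a side carrying fewer than k active vertices
   of a and of b, or is a split with a side inside one vertex of P.
   Descending T from the leaf of a vertex of G outside a and b reaches a cut
   Z inside a :|: b missing fewer than 2k active vertices of a and of b;
   descending further while this persists, the two children of the last such
   Z are splits carrying k active vertices of a and of b respectively.  The
   complete bipartite graphs between these and N(Z) yield a matching across
   Z saturating N(Z), whence |N(Z)| < k; and tot^-1(Z) = {a, b}. *)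

From mathcomp Require Import all_boot zify.
Set Implicit Arguments. Unset Strict Implicit. Unset Printing Implicit Defensive.

Lemma setD_setD (T : finType) (A B : {set T}) : A \subset B -> B :\: (B :\: A) = A.
Proof. by move=> AB; rewrite setDDr setDv set0U; apply/setIidPr. Qed.

Lemma cardsIC (T : finType) (S X : {set T}) : #|S :&: X| + #|S :&: ~: X| = #|S|.
Proof. by rewrite -setDE cardsID. Qed.

Lemma cardsIU_disjoint (T : finType) (S X Y : {set T}) : [disjoint X & Y] ->
  #|S :&: (X :|: Y)| = #|S :&: X| + #|S :&: Y|.
Proof.
move=> dXY; rewrite setIUr cardsU.
suff -> : S :&: X :&: (S :&: Y) = set0 by rewrite cards0 subn0.
by rewrite setIACA (disjoint_setI0 dXY) setI0.
Qed.

(** * Matchings across a cut *)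

Section Matchings.
Variables (V : finType) (e : rel V).
Implicit Types (C S T : {set V}) (M : {set V * V}).

Lemma matching_card_le_mm C M : matching_across e C M -> #|M| <= mm e C.
Proof. by move=> H; rewrite /mm; apply: leq_bigmax_cond. Qed.

Lemma exists_inj_into S T : #|S| <= #|T| ->
  exists2 f : V -> V, {in S &, injective f} & forall s, s \in S -> f s \in T.
Proof.
move=> ST; pose f s := nth s (enum T) (index s (enum S)).
have idx_lt s : s \in S -> index s (enum S) < size (enum T).
  by move=> sS; rewrite -cardE; apply: leq_trans ST; rewrite cardE index_mem mem_enum.
exists f => [s1 s2 s1S s2S|s sS]; last by rewrite -mem_enum mem_nth ?idx_lt.
rewrite /f (set_nth_default s1 s2 (idx_lt _ s2S)) => /eqP.
rewrite nth_uniq ?enum_uniq ?idx_lt // => /eqP Ei.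
by rewrite -(nth_index s1 (_ : s1 \in enum S)) ?mem_enum // Ei nth_index ?mem_enum.
Qed.

Lemma matching_of_injections C (I : {set V}) (f g : V -> V) :
  {in I &, injective f} -> {in I &, injective g} ->
  (forall i, i \in I -> [/\ f i \in C, g i \notin C & e (f i) (g i)]) ->
  matching_across e C [set (f i, g i) | i in I] /\ #|[set (f i, g i) | i in I]| = #|I|.
Proof.
move=> finj ginj H; split; last by rewrite card_in_imset // => i j iI jI [/finj->].
apply/andP; split; apply/forallP => p; apply/implyP => /imsetP[i iI ->] /=.
  by have [-> -> ->] := H i iI.
apply/forallP => q; apply/implyP => /imsetP[j jI ->] /=; apply/implyP => neq.
have nij : i != j by apply: contraNneq neq => ->.
by apply/andP; split; apply: contraNN nij => /eqP;
  [move/(finj _ _ iI jI) | move/(ginj _ _ iI jI)] => ->.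
Qed.

Lemma complete_matching C S T : S \subset C -> T \subset ~: C ->
  (forall s t, s \in S -> t \in T -> e s t) ->
  exists M, [/\ matching_across e C M, minn #|S| #|T| <= #|M| &
    forall p, p \in M -> p.1 \in S /\ p.2 \in T].
Proof.
move=> SC TC Hc; have sC s : s \in S -> s \in C := subsetP SC s.
have tC t : t \in T -> t \notin C by move/(subsetP TC); rewrite inE.
have [ST|/ltnW TS] := leqP #|S| #|T|.
  have [f finj fST] := exists_inj_into ST.
  have [HM cM] := @matching_of_injections C S id f (in2W (@inj_id V)) finj
    (fun s sS => And3 (sC s sS) (tC _ (fST s sS)) (Hc _ _ sS (fST s sS))).
  exists [set (id s, f s) | s in S]; split; rewrite ?cM ?geq_minl //.
  by move=> p /imsetP[s sS ->]; split; rewrite ?fST.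
have [f finj fTS] := exists_inj_into TS.
have [HM cM] := @matching_of_injections C T f id finj (in2W (@inj_id V))
  (fun t tT => And3 (sC _ (fTS t tT)) (tC t tT) (Hc _ _ (fTS t tT) tT)).
exists [set (f t, id t) | t in T]; split; rewrite ?cM ?geq_minr //.
by move=> p /imsetP[t tT ->]; split; rewrite ?fTS.
Qed.

Lemma mm_ge_complete C S T : S \subset C -> T \subset ~: C ->
  (forall s t, s \in S -> t \in T -> e s t) -> minn #|S| #|T| <= mm e C.
Proof.
move=> SC TC Hc; have [M [HM cM _]] := complete_matching SC TC Hc.
exact: leq_trans cM (matching_card_le_mm HM).
Qed.

Lemma mm_ge_complete2 C S1 T1 S2 T2 :
  S1 \subset C -> T1 \subset ~: C -> S2 \subset C -> T2 \subset ~: C ->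
  (forall s t, s \in S1 -> t \in T1 -> e s t) ->
  (forall s t, s \in S2 -> t \in T2 -> e s t) ->
  [disjoint S1 & S2] -> [disjoint T1 & T2] ->
  minn #|S1| #|T1| + minn #|S2| #|T2| <= mm e C.
Proof.
move=> S1C T1C S2C T2C H1 H2 dS dT.
have [M1 [/andP[/forallP M1a /forallP M1b] c1 in1]] := complete_matching S1C T1C H1.
have [M2 [/andP[/forallP M2a /forallP M2b] c2 in2]] := complete_matching S2C T2C H2.
have apart p q : p \in M1 -> q \in M2 -> (p.1 != q.1) && (p.2 != q.2).
  move=> pM qM; have [p1 p2] := in1 p pM; have [q1 q2] := in2 q qM.
  apply/andP; split; first by apply: contraTneq p1 => ->; rewrite (disjointFl dS q1).
  by apply: contraTneq p2 => ->; rewrite (disjointFl dT q2).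
have dM : [disjoint M1 & M2].
  by apply/pred0P => p /=; apply/negP => /andP[pM1 pM2]; move: (apart p p pM1 pM2); rewrite eqxx.
have HM : matching_across e C (M1 :|: M2).
  apply/andP; split; apply/forallP => p; apply/implyP => /setUP[pM|pM];
    [by move: (M1a p); rewrite pM | by move: (M2a p); rewrite pM | |];
    apply/forallP => q; apply/implyP => /setUP[qM|qM]; apply/implyP => neq.
  - by move: (M1b p); rewrite pM => /forallP/(_ q); rewrite qM neq.
  - exact: apart.
  - by rewrite eq_sym (eq_sym p.2); apply: apart.
  - by move: (M2b p); rewrite pM => /forallP/(_ q); rewrite qM neq.
have := matching_card_le_mm HM; rewrite cardsU (disjoint_setI0 dM) cards0 subn0.
by apply: leq_trans; apply: leq_add.
Qed.

End Matchings.

(** * Graphs of a split decomposition *)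

Section SplitDecomposition.
Variables (V : finType) (e : rel V).
Hypotheses (e_sym : symmetric e) (e_irr : irreflexive e).
Implicit Types (X Y : {set V}) (x y v : V) (L : lgraph V) (A : {set {set V}}).

Definition cross X Y := [exists x in X, exists y in Y, e x y].

Lemma crossP X Y : reflect (exists x y, [/\ x \in X, y \in Y & e x y]) (cross X Y).
Proof.
apply: (iffP existsP) => [[x /andP[xX /existsP[y /andP[yY exy]]]]|[x [y [xX yY exy]]]].
  by exists x, y.
by exists x; rewrite xX; apply/existsP; exists y; rewrite yY.
Qed.

Lemma crossC X Y : cross X Y = cross Y X.
Proof.
by apply/crossP/crossP => -[x [y [xX yY exy]]]; exists y, x; rewrite e_sym.
Qed.

Lemma in_Nbhd (S : {set V}) y : (y \in Nbhd e S) = (y \notin S) && [exists x in S, e x y].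
Proof. by rewrite /Nbhd in_setD inE. Qed.

Lemma actP X y : reflect (y \in X /\ exists2 x, x \notin X & e y x) (y \in act e X).
Proof.
rewrite /act in_Nbhd in_setC negbK.
apply: (iffP andP) => [[yX /existsP[x /andP[xX exy]]]|[yX [x xX eyx]]].
  by split=> //; exists x; [rewrite -in_setC | rewrite e_sym].
by split=> //; apply/existsP; exists x; rewrite in_setC xX e_sym.
Qed.

Lemma act_sub X : act e X \subset X.
Proof. by apply/subsetP => y; rewrite /act in_Nbhd in_setC negbK => /andP[]. Qed.

(* The vertices of L partition V(G), adjacency in L is adjacency in G
   between parts, and along every edge of L the active vertices of the two
   ends are completely joined; splitting preserves all of this. *)
Record tot_graph L : Prop := {
  lvert_neq0 : forall X, X \in lverts L -> X != set0;
  lvert_disjoint : forall X Y, X \in lverts L -> Y \in lverts L -> X != Y ->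
    [disjoint X & Y];
  lvert_cover : forall v, exists2 X, X \in lverts L & v \in X;
  ladjE : forall X Y, X \in lverts L -> Y \in lverts L ->
    ladj L X Y = (X != Y) && cross X Y;
  cross_act : forall X Y x y, X \in lverts L -> Y \in lverts L -> X != Y ->
    cross X Y -> x \in act e X -> y \in act e Y -> e x y }.

Lemma tot_graph_init : tot_graph (init_lgraph e).
Proof.
split => /=.
- by move=> X /imsetP[v _ ->]; apply/set0Pn; exists v; apply: set11.
- move=> X Y /imsetP[u _ ->] /imsetP[v _ ->] neq.
  by rewrite disjoints1 in_set1; apply: contra neq => /eqP->.
- by move=> v; exists [set v]; [apply: imset_f | apply: set11].
- move=> X Y /imsetP[u _ ->] /imsetP[v _ ->].
  case: eqVneq => [->|_] //=; apply/negbTE/crossP => -[x [y [/set1P-> /set1P-> euu]]].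
  by rewrite e_irr in euu.
- move=> X Y x y /imsetP[u _ ->] /imsetP[v _ ->] _ /crossP[x' [y' [/set1P-> /set1P-> h]]].
  by move=> /actP[/set1P-> _] /actP[/set1P-> _].
Qed.

Section TotGraphFacts.
Variable L : lgraph V.
Hypothesis HL : tot_graph L.

Lemma lvert_eq {X Y v} : X \in lverts L -> Y \in lverts L -> v \in X -> v \in Y -> X = Y.
Proof.
move=> XL YL vX vY; apply/eqP; apply: contraT => neq.
have := lvert_disjoint HL XL YL neq; rewrite disjoint_subset => /subsetP/(_ v vX).
by rewrite !inE vY.
Qed.

Lemma ladjC X Y : X \in lverts L -> Y \in lverts L -> ladj L X Y = ladj L Y X.
Proof. by move=> XL YL; rewrite !(ladjE HL) // crossC eq_sym. Qed.

Lemma ladj_act X Y x y : X \in lverts L -> Y \in lverts L -> ladj L X Y ->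
  x \in act e X -> y \in act e Y -> e x y.
Proof. by move=> XL YL; rewrite (ladjE HL) // => /andP[neq c]; apply: (cross_act HL). Qed.

Lemma edge_ladj X Y x y : X \in lverts L -> Y \in lverts L -> x \in X -> y \in Y ->
  X != Y -> e x y -> [/\ x \in act e X, y \in act e Y & ladj L X Y].
Proof.
move=> XL YL xX yY neq exy.
have yX : y \notin X by apply: contraNN neq => yX; rewrite (lvert_eq XL YL yX yY).
have xY : x \notin Y by apply: contraNN neq => xY; rewrite (lvert_eq XL YL xX xY).
split; first by apply/actP; split => //; exists y.
  by apply/actP; split => //; exists x; rewrite // e_sym.
by rewrite (ladjE HL) // neq; apply/crossP; exists x, y.
Qed.

Lemma is_totinv_pair (Z a b : {set V}) :
  a \in lverts L -> b \in lverts L -> Z \subset a :|: b ->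
  Z :&: a != set0 -> Z :&: b != set0 -> is_totinv L Z [set a; b].
Proof.
move=> aL bL Zab Za Zb; apply/minsetP; split.
  apply/andP; split; first by apply/subsetP => u /set2P[->|->].
  apply/subsetP => v vZ; apply/bigcupP.
  by case/setUP: (subsetP Zab _ vZ) => vu; [exists a; rewrite ?set21 | exists b; rewrite ?set22].
move=> B /andP[BL ZB] Bab; apply/eqP; rewrite eqEsubset Bab /=.
have inB u : u \in lverts L -> Z :&: u != set0 -> u \in B.
  move=> uL /set0Pn[v /setIP[vZ vu]]; case/bigcupP: (subsetP ZB _ vZ) => u' u'B vu'.
  by rewrite (lvert_eq uL (subsetP BL _ u'B) vu vu').
by apply/subsetP => u /set2P[->|->]; apply: inB.
Qed.

End TotGraphFacts.

(* The neighbourhood condition of a split, seen from the side A only. *)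
Definition one_sided_split L A : Prop :=
  forall X X' Y, X \in A -> X' \in A -> Y \in lverts L :\: A ->
    (exists2 Z, Z \in lverts L :\: A & ladj L X Z) ->
    (exists2 Z, Z \in lverts L :\: A & ladj L X' Z) ->
    ladj L X Y -> ladj L X' Y.

Section Piece.
Variable L : lgraph V.
Hypothesis HL : tot_graph L.
Variable A : {set {set V}}.
Hypotheses (AL : A \subset lverts L) (B_neq0 : lverts L :\: A != set0).
Hypothesis HA : one_sided_split L A.

Let B := lverts L :\: A.
Let m := \bigcup_(Y in B) Y.
Let nb := [set X in A | [exists Y in B, ladj L X Y]].

Lemma marker_disjoint X v : X \in A -> v \in X -> v \notin m.
Proof.
move=> XA vX; apply/bigcupP => -[Y /setDP[YL YA] vY].
by move: YA; rewrite -(lvert_eq HL (subsetP AL _ XA) YL vX vY) XA.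
Qed.

Lemma marker_neq0 : m != set0.
Proof.
case/set0Pn: B_neq0 => Y YB; have YL : Y \in lverts L by case/setDP: YB.
by case/set0Pn: (lvert_neq0 HL YL) => v vY; apply/set0Pn; exists v; apply/bigcupP; exists Y.
Qed.

Lemma marker_notin : m \notin A.
Proof.
apply/negP => mA; case/set0Pn: marker_neq0 => v vm.
by have := marker_disjoint mA vm; rewrite vm.
Qed.

Lemma marker_nbr X : X \in A -> (X \in nb) = cross m X.
Proof.
move=> XA; have XL := subsetP AL _ XA.
rewrite inE XA /=; apply/existsP/crossP.
  case=> Y /andP[YB]; have YL : Y \in lverts L by case/setDP: YB.
  rewrite (ladjE HL) // => /andP[_ /crossP[x [y [xX yY exy]]]].
  by exists y, x; rewrite e_sym; split => //; apply/bigcupP; exists Y.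
case=> y [x [/bigcupP[Y YB yY] xX eyx]]; exists Y; rewrite YB /=.
have YL : Y \in lverts L by case/setDP: YB.
rewrite (ladjE HL) //; apply/andP; split.
  by apply: contraTneq YB => <-; rewrite inE XA.
by apply/crossP; exists x, y; rewrite e_sym.
Qed.

(* A vertex of G active for the marker is active in some Z on the other
   side, through a neighbour lying in some X' of A; the one-sided split
   condition transfers the edge X'Z to every X of A adjacent to B. *)
Lemma marker_act_edge X x y : X \in A -> cross m X ->
  x \in act e m -> y \in act e X -> e x y.
Proof.
move=> XA /crossP[x' [y' [x'm y'X ex'y']]] /actP[xm [z zm exz]] yX.
case/bigcupP: x'm => Y YB x'Y; case/bigcupP: xm => Z ZB xZ.
have XL := subsetP AL _ XA.
have inB_L W : W \in B -> W \in lverts L by case/setDP.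
have AB_neq W W' : W \in A -> W' \in B -> W != W'.
  by move=> WA W'B; apply: contraTneq W'B => <-; rewrite inE WA.
have [X' X'L zX'] := lvert_cover HL z.
have X'A : X' \in A.
  by apply: contraNT zm => X'nA; apply/bigcupP; exists X' => //; rewrite inE X'nA.
have [_ xZact adjX'Z] :=
  edge_ladj HL X'L (inB_L _ ZB) zX' xZ (AB_neq _ _ X'A ZB) (etrans (e_sym z x) exz).
have adjXY : ladj L X Y.
  rewrite (ladjE HL XL (inB_L _ YB)) (AB_neq _ _ XA YB) /=.
  by apply/crossP; exists y', x'; rewrite e_sym.
have adjXZ : ladj L X Z by apply: (HA X'A XA ZB _ _ adjX'Z); [exists Z | exists Y].
by apply: (ladj_act HL (inB_L _ ZB) XL _ xZact yX); rewrite (ladjC HL (inB_L _ ZB) XL).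
Qed.

Lemma tot_graph_piece : tot_graph (piece L A).
Proof.
have mA := marker_notin.
have neq_mA X : X \in A -> (X == m) = false.
  by move=> XA; apply/negbTE; apply: contraNneq mA => <-.
have disj_Am X : X \in A -> [disjoint X & m].
  move=> XA; rewrite disjoint_subset; apply/subsetP => v vX.
  by rewrite inE; apply: marker_disjoint vX.
split => /=.
- move=> X /setU1P[->|XA]; first exact: marker_neq0.
  exact: (lvert_neq0 HL (subsetP AL _ XA)).
- move=> X Y /setU1P[->|XA] /setU1P[->|YA] neq; first by rewrite eqxx in neq.
  + by rewrite disjoint_sym; apply: disj_Am.
  + exact: disj_Am.
  + by apply: (lvert_disjoint HL); rewrite ?(subsetP AL).
- move=> v; have [X XL vX] := lvert_cover HL v.
  case XA: (X \in A); first by exists X; rewrite ?setU1r.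
  by exists m; [apply: setU11 | apply/bigcupP; exists X; rewrite // inE XA].
- move=> X Y /setU1P[->|XA] /setU1P[->|YA].
  + by rewrite eqxx inE (negbTE mA).
  + by rewrite eqxx marker_nbr // eq_sym neq_mA.
  + by rewrite neq_mA // eqxx marker_nbr // crossC.
  + by rewrite !neq_mA // XA YA /= (ladjE HL) ?(subsetP AL).
- move=> X Y x y /setU1P[->|XA] /setU1P[->|YA] neq; first by rewrite eqxx in neq.
  + exact: marker_act_edge.
  + by rewrite crossC e_sym => c xX ym; apply: (marker_act_edge XA c ym xX).
  + by apply: (cross_act HL); rewrite ?(subsetP AL).
Qed.

End Piece.

Lemma split_one_sided L A : is_split (lverts L) (ladj L) A -> one_sided_split L A.
Proof.
move=> /and5P[_ _ _ _ /forallP H] X X' Y XA X'A YB [Z ZB adjZ] [Z' Z'B adjZ'] adjY.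
move: (H X); rewrite XA => /forallP/(_ X'); rewrite X'A /=.
have -> : [exists y in lverts L :\: A, ladj L X y] by apply/existsP; exists Z; rewrite ZB.
have -> : [exists y in lverts L :\: A, ladj L X' y] by apply/existsP; exists Z'; rewrite Z'B.
by move=> /eqP/setP/(_ Y); rewrite !inE -in_setD YB adjY.
Qed.

Lemma split_one_sided_compl L A : tot_graph L -> is_split (lverts L) (ladj L) A ->
  one_sided_split L (lverts L :\: A).
Proof.
move=> HL Hs; have /and5P[AL _ _ _ /forallP H] := Hs.
rewrite /one_sided_split setD_setD // => X X' Y XB X'B YA _ [Z' Z'A adjZ'] adjY.
have [XL X'L] : X \in lverts L /\ X' \in lverts L by case/setDP: XB; case/setDP: X'B.
have [YL Z'L] := (subsetP AL _ YA, subsetP AL _ Z'A).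
rewrite (ladjC HL) // in adjY; rewrite (ladjC HL) // in adjZ'.
move: (H Z'); rewrite Z'A => /forallP/(_ Y); rewrite YA /=.
have -> : [exists y in lverts L :\: A, ladj L Z' y] by apply/existsP; exists X'; rewrite X'B.
have -> : [exists y in lverts L :\: A, ladj L Y y] by apply/existsP; exists X; rewrite XB.
move=> /eqP/setP/(_ X'); rewrite !inE -in_setD X'B adjZ' /= => adjYX'.
by rewrite (ladjC HL) // -adjYX'.
Qed.

Lemma split_decomp_tot_graph L D : split_decomp L D -> tot_graph L ->
  forall P, D P -> tot_graph P /\ lprime P.
Proof.
elim=> {L D} [L Lp|L A D1 D2 Hs _ IH1 _ IH2] HL P; first by move=> ->.
have /and5P[AL A2 B2 _ _] := Hs.
case=> [/IH1|/IH2]; apply; apply: tot_graph_piece => //.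
- by rewrite -card_gt0; apply: leq_trans B2.
- exact: split_one_sided.
- exact: subsetDl.
- by rewrite setD_setD // -card_gt0; apply: leq_trans A2.
- exact: split_one_sided_compl.
Qed.

Definition graph_connected := forall x y, connect e x y.

(* The first split, if any, certifies that G is connected. *)
Lemma split_decomp_init_connected D : split_decomp (init_lgraph e) D ->
  (forall P, D P -> P = init_lgraph e) \/ graph_connected.
Proof.
move=> HD; inversion HD as [L Lp E1 E2|L A D1 D2 Hs H1 H2 E1 E2]; first by left.
right; have /and5P[_ _ _ /forallP Hc _] := Hs.
move=> u w; set Vs := lverts (init_lgraph e) in Hc.
have uV : [set u] \in Vs by apply: imset_f.
have wV : [set w] \in Vs by apply: imset_f.
move: (Hc [set u]); rewrite uV => /forallP/(_ [set w]); rewrite wV /=.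
set R := (fun _ _ => _).
have Rsym : connect_sym R.
  apply: sym_connect_sym => X Y; rewrite /R /=.
  by have := crossC X Y; rewrite /cross => ->; case: (X \in Vs); case: (Y \in Vs).
pose reach := [pred X : {set V} | [exists v in X, connect e u v]].
have cl : closed R reach.
  apply: intro_closed => // X Y /and3P[/imsetP[x _ ->] /imsetP[y _ ->] cXY].
  move=> /existsP[v /andP[/set1P-> cuv]]; apply/existsP; exists y; rewrite set11 /=.
  move: cXY => /existsP[x' /andP[/set1P-> /existsP[y' /andP[/set1P-> exy]]]].
  exact: connect_trans cuv (connect1 exy).
move=> cuw; have := closed_connect cl cuw.
have -> : [set u] \in reach by apply/existsP; exists u; rewrite set11 connect0.
by move=> /esym /existsP[v /andP[/set1P-> ->]].
Qed.

Lemma connected_edge_out : graph_connected -> forall (S : {set V}) x y,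
  x \in S -> y \notin S -> exists s t, [/\ s \in S, t \notin S & e s t].
Proof.
move=> Gc S x y xS yS.
have [/exists_inP[s sS /exists_inP[t]]|noedge] :=
  boolP [exists s in S, exists t in ~: S, e s t].
  by rewrite inE => tS est; exists s, t.
have cl : closed e S.
  apply: intro_closed; first exact: sym_connect_sym.
  move=> s t est sS; apply: contraNT noedge => tS.
  by apply/exists_inP; exists s => //; apply/exists_inP; exists t; rewrite ?inE.
by move: yS; rewrite -(closed_connect cl (Gc x y)) xS.
Qed.

Lemma tot_graph_connected P : tot_graph P -> graph_connected ->
  connected_on (lverts P) (ladj P).
Proof.
move=> HP Gc; apply/forallP => X; apply/implyP => XL; apply/forallP => Y; apply/implyP => YL.
set R := (fun _ _ => _).
pose reach := [pred v | [exists Z in lverts P, (v \in Z) && connect R X Z]].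
have cl : closed e reach.
  apply: intro_closed; first exact: sym_connect_sym.
  move=> v w evw /existsP[Z /and3P[ZL vZ cXZ]].
  have [Z' Z'L wZ'] := lvert_cover HP w.
  apply/existsP; exists Z'; rewrite Z'L wZ' /=.
  case: (eqVneq Z Z') => [<-|neq] //; apply: connect_trans cXZ (connect1 _).
  by rewrite /R ZL Z'L (ladjE HP) // neq; apply/crossP; exists v, w.
case/set0Pn: (lvert_neq0 HP XL) => x xX; case/set0Pn: (lvert_neq0 HP YL) => y yY.
have : x \in reach by apply/existsP; exists X; rewrite XL xX connect0.
rewrite (closed_connect cl (Gc x y)) => /existsP[Z /and3P[ZL yZ cXZ]].
by rewrite (lvert_eq HP YL ZL yY yZ).
Qed.

End SplitDecomposition.

(** * Splits of G seen from a prime graph *)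

Section PrimeGraph.
Variables (V : finType) (e : rel V).
Hypothesis e_sym : symmetric e.
Implicit Types (X Y : {set V}) (x y v : V).

Definition complete_across X := forall x x' y y', x \in X -> x' \in X ->
  y \notin X -> y' \notin X -> e x y -> e x' y' -> e x y'.

Lemma split_complete_across X : is_split setT e X -> complete_across X.
Proof.
move=> /and5P[_ _ _ _ /forallP H] x x' y y' xX x'X yX y'X exy ex'y'.
move: (H x); rewrite xX => /forallP/(_ x'); rewrite x'X /=.
have -> : [exists z in setT :\: X, e x z] by apply/existsP; exists y; rewrite !inE yX.
have -> : [exists z in setT :\: X, e x' z] by apply/existsP; exists y'; rewrite !inE y'X.
by move=> /eqP/setP/(_ y'); rewrite !inE y'X ex'y'.
Qed.

Lemma complete_acrossC X : complete_across X -> complete_across (~: X).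
Proof.
move=> H x x' y y'; rewrite !inE !negbK => xX x'X yX y'X exy ex'y'.
by rewrite e_sym; apply: (H y' y x' x) => //; rewrite e_sym.
Qed.

Variable P : lgraph V.
Hypotheses (HP : tot_graph e P) (P_prime : lprime P) (P_nontriv : 3 < #|lverts P|).
Hypothesis Gc : graph_connected e.

Let L := lverts P.
Let Pc : connected_on L (ladj P) := tot_graph_connected e_sym HP Gc.

Lemma ladjxx u : u \in L -> ladj P u u = false.
Proof. by move=> uL; rewrite (ladjE HP) // eqxx. Qed.

Lemma exists_nbr u : u \in L -> exists2 w, w \in L & ladj P u w.
Proof.
move=> uL; have : 1 < #|L :\ u| by move: P_nontriv; rewrite /L (cardsD1 u) uL; lia.
case/card_gt1P => w0 [w1 [w0L _ _]]; move: w0L; rewrite in_setD1 => /andP[nw0u w0L].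
move: Pc => /forallP/(_ u); rewrite uL.
move=> /forallP/(_ w0); rewrite w0L /= => /connectP[[|w p] /= pth Ew0].
  by rewrite Ew0 eqxx in nw0u.
by move: pth => /andP[/and3P[_ wL uw] _]; exists w.
Qed.

Lemma act_nonempty u : u \in L -> exists x, x \in act e u.
Proof.
move=> uL; have [w wL uw] := exists_nbr uL.
move: (uw); rewrite (ladjE HP) // => /andP[neq /crossP[x [y [xu yw exy]]]].
by have [xa _ _] := edge_ladj e_sym HP uL wL xu yw neq exy; exists x.
Qed.

Lemma not_twins_nor_pendant u1 u2 : u1 \in L -> u2 \in L -> u1 != u2 ->
  (forall w, w \in L -> w != u1 -> w != u2 -> ladj P u1 w = ladj P u2 w) \/
  (forall w, w \in L -> w != u2 -> ~~ ladj P u1 w) -> False.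
Proof.
move=> u1L u2L neq H; apply: (negP (P_prime [set u1; u2])).
have sub : [set u1; u2] \subset L by apply/subsetP => w /set2P[->|->].
apply/and5P; split => //.
- by rewrite cards2 neq.
- rewrite cardsD; have : #|L :&: [set u1; u2]| <= 2.
    by apply: leq_trans (subset_leq_card (subsetIr _ _)) _; rewrite cards2 neq.
  by move: P_nontriv; rewrite /L; lia.
apply/forallP => x; apply/implyP => /set2P xE; apply/forallP => x'; apply/implyP => /set2P x'E.
apply/implyP => /andP[/existsP[y /andP[yD ey]] /existsP[y' /andP[y'D ey']]].
have yL c : c \in L :\: [set u1; u2] -> [/\ c \in L, c != u1 & c != u2].
  by rewrite !inE negb_or => /andP[/andP[]]; split.
case: (eqVneq x x') => [->//|nxx'].
case: H => [H|H].
  apply/eqP/setP => c; rewrite !inE.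
  case cL: (c \in L); rewrite ?andbF ?andbT //.
  case: (eqVneq c u1) => [//|nc1]; case: (eqVneq c u2) => [//|nc2] /=.
  have := H c cL nc1 nc2.
  by case: xE => ->; case: x'E => -> //= ->; rewrite eqxx in nxx'.
exfalso.
have [c cD adj] : exists2 c, c \in L :\: [set u1; u2] & ladj P u1 c.
  case: xE => Ex; first by exists y => //; rewrite -Ex.
  case: x'E => Ex'; first by exists y' => //; rewrite -Ex'.
  by rewrite Ex Ex' eqxx in nxx'.
have [cL _ nc2] := yL c cD.
by have := H c cL nc2; rewrite adj.
Qed.

Lemma two_nbrs u : u \in L -> exists w1 w2,
  [/\ w1 \in L, w2 \in L, w1 != w2, ladj P u w1 & ladj P u w2].
Proof.
move=> uL; have [c cL uc] := exists_nbr uL.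
have nuc : u != c by apply: contraTneq uc => <-; rewrite ladjxx.
case b : [exists w in L, (w != c) && ladj P u w].
  by case/existsP: b => w /and3P[wL nwc uw]; exists w, c.
exfalso; apply: (not_twins_nor_pendant uL cL nuc); right => w wL nwc.
by apply: contraFN b => uw; apply/existsP; exists w; rewrite wL nwc.
Qed.

Definition outside X := [set u in L | act e u \subset ~: X].

Lemma outsideP X u x : u \in outside X -> x \in act e u -> x \notin X.
Proof. by rewrite inE => /andP[_ /subsetP H] /H; rewrite inE. Qed.

Lemma notin_outside X u : u \in L -> u \notin outside X -> exists2 x, x \in act e u & x \in X.
Proof.
move=> uL; rewrite inE uL => /subsetPn[x xa]; rewrite inE negbK => xX.
by exists x.
Qed.

Lemma outside_sub X : outside X \subset L.
Proof. by apply/subsetP => u; rewrite inE => /andP[]. Qed.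

Section SplitSide.
Variable X : {set V}.
Hypothesis HX : complete_across X.

Let inside := L :\: outside X.

(* This is the split condition for (inside, outside X) in P. *)
Lemma inside_outside_ladj z w0 w : z \in inside -> w0 \in outside X ->
  ladj P z w0 -> w \in outside X ->
  ladj P z w = [exists t in act e w, exists s in X, e s t].
Proof.
move=> zA w0B zw0 wB.
have [zL wL w0L] : [/\ z \in L, w \in L & w0 \in L].
  by split; [case/setDP: zA | apply: (subsetP (outside_sub X)) ..].
have [x xa xX] := notin_outside zL (elimT setDP zA).2.
have [q qa] := act_nonempty w0L.
have exq : e x q := ladj_act HP zL w0L zw0 xa qa.
apply/idP/exists_inP => [zw|[t ta /exists_inP[s sX est]]].
  have [t ta] := act_nonempty wL; exists t => //.
  by apply/exists_inP; exists x; rewrite // (ladj_act HP zL wL zw xa ta).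
have ext : e x t := HX xX sX (outsideP w0B qa) (outsideP wB ta) exq est.
have nzw : z != w by apply: contraTneq zA => ->; rewrite in_setD wB.
by have [] := edge_ladj e_sym HP zL wL (subsetP (act_sub e _) _ xa) (subsetP (act_sub e _) _ ta) nzw ext.
Qed.

Lemma outside_not_split : 2 <= #|inside| -> 2 <= #|outside X| -> False.
Proof.
move=> A2 B2; apply: (negP (P_prime inside)).
have LA : lverts P :\: inside = outside X by apply: setD_setD; apply: outside_sub.
apply/and5P; split; rewrite ?LA //; first exact: subsetDl.
apply/forallP => z; apply/implyP => zA; apply/forallP => z'; apply/implyP => z'A.
apply/implyP => /andP[/exists_inP[w0 w0B zw0] /exists_inP[w0' w0'B zw0']].
apply/eqP/setP => w; have [wB|] := boolP (w \in outside X); last first.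
  by rewrite !inE => /negbTE ->.
rewrite !inE; move: (wB); rewrite inE => -> /=.
by rewrite (inside_outside_ladj zA w0B) // (inside_outside_ladj z'A w0'B).
Qed.

Lemma outside_boundary z x : z \in outside X -> x \in X -> x \in z ->
  forall y x', y \notin X -> x' \in X -> e x' y -> y \in z.
Proof.
move=> zB xX xz y x' yX x'X ex'y.
have xXz : x \in X :&: z by rewrite inE xX.
have yXz : y \notin X :&: z by rewrite inE (negbTE yX).
have [s [t [/setIP[sX sz] tXz est]]] := connected_edge_out e_sym Gc xXz yXz.
have stay v : e s v -> v \in z.
  move=> esv; apply: contraTT sX => vz; apply: (outsideP zB).
  by apply/(actP e_sym); split => //; exists v.
have tX : t \notin X by apply: contraNN tXz => tX; rewrite inE tX stay.
exact: stay (HX sX x'X tX yX est ex'y).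
Qed.

Variable y0 : V.
Hypothesis y0X : y0 \notin X.

Lemma outside_meet_X_eq z z' x x' : z \in outside X -> z' \in outside X ->
  x \in X -> x \in z -> x' \in X -> x' \in z' -> z = z'.
Proof.
move=> zB z'B xX xz x'X x'z'.
have [s [t [sX tX est]]] := connected_edge_out e_sym Gc xX y0X.
have [zL z'L] := (subsetP (outside_sub X) _ zB, subsetP (outside_sub X) _ z'B).
exact: (lvert_eq HP zL z'L (outside_boundary zB xX xz tX sX est)
  (outside_boundary z'B x'X x'z' tX sX est)).
Qed.

(* The only inside vertex zo would have to send X-edges into zb, and then
   every neighbour of zo other than zb would also collapse onto zb. *)
Lemma inside_meet_X_false zb zo xb xo : zb \in outside X -> xb \in X -> xb \in zb ->
  zo \in inside -> #|inside| <= 1 -> xo \in X -> xo \in zo -> False.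
Proof.
move=> zbB xbX xbz zoA A1 xoX xoz.
have zoL : zo \in L by case/setDP: zoA.
have zbL := subsetP (outside_sub X) _ zbB.
have only_zo w : w \in L -> w != zo -> w \in outside X.
  move=> wL; apply: contraNT => wnB.
  by rewrite (card_le1_eqP A1 w zo) // inE wL wnB.
have nob : zo != zb by apply: contraTneq zoA => ->; rewrite inE zbB.
have xoXz : xo \in X :&: zo by rewrite inE xoX.
have y0Xz : y0 \notin X :&: zo by rewrite inE (negbTE y0X).
have [q [r [/setIP[qX qz] rXz eqr]]] := connected_edge_out e_sym Gc xoXz y0Xz.
have rX : r \notin X.
  apply: contraNN rXz => rX; rewrite inE rX /=; apply: contraTT rX => rz.
  have [w wL rw] := lvert_cover HP r.
  have nzw : zo != w by apply: contraNneq rz => ->.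
  have [_ ra _] := edge_ladj e_sym HP zoL wL qz rw nzw eqr.
  by apply: (outsideP (only_zo w wL _) ra); rewrite eq_sym.
have rzb := outside_boundary zbB xbX xbz rX qX eqr.
have [qa _ _] := edge_ladj e_sym HP zoL zbL qz rzb nob eqr.
have [w1 [w2 [w1L w2L n12 a1 a2]]] := two_nbrs zoL.
have [w [wL nwb aw]] : exists w, [/\ w \in L, w != zb & ladj P zo w].
  case: (eqVneq w1 zb) => [E1|n1]; last by exists w1.
  by exists w2; split => //; rewrite -E1 eq_sym.
have nwo : w != zo by apply: contraTneq aw => ->; rewrite ladjxx.
have wB := only_zo w wL nwo.
have [r' r'a] := act_nonempty wL.
have r'zb := outside_boundary zbB xbX xbz (outsideP wB r'a) qX (ladj_act HP zoL wL aw qa r'a).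
by move/eqP: nwb; apply; apply: (lvert_eq HP wL zbL (subsetP (act_sub e _) _ r'a) r'zb).
Qed.

Lemma X_in_lvert x0 : x0 \in X -> #|inside| <= 1 -> exists2 u, u \in L & X \subset u.
Proof.
move=> x0X A1; have [z0 z0L x0z] := lvert_cover HP x0.
exists z0 => //; apply/subsetP => x1 x1X.
have [z1 z1L x1z] := lvert_cover HP x1.
case: (eqVneq z1 z0) => [<-//|n10]; exfalso.
have [z0B|z0A] := boolP (z0 \in outside X); have [z1B|z1A] := boolP (z1 \in outside X).
- by move/eqP: n10; apply; apply: (outside_meet_X_eq z1B z0B x1X x1z x0X x0z).
- by apply: (inside_meet_X_false z0B x0X x0z _ A1 x1X x1z); rewrite inE z1A.
- by apply: (inside_meet_X_false z1B x1X x1z _ A1 x0X x0z); rewrite inE z0A.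
- by move/eqP: n10; apply; apply: (card_le1_eqP A1 z0 z1); rewrite in_setD ?z0A ?z1A.
Qed.

End SplitSide.

Lemma act_nbr_outside X u x : #|outside (~: X)| <= 1 -> u \in L -> x \in act e u ->
  exists2 g, g \notin X & e x g.
Proof.
move=> B1 uL xa; have [w1 [w2 [w1L w2L n12 a1 a2]]] := two_nbrs uL.
have [w [wL aw wnB]] : exists w, [/\ w \in L, ladj P u w & w \notin outside (~: X)].
  have [w1B|] := boolP (w1 \in outside (~: X)); last by exists w1.
  have [w2B|] := boolP (w2 \in outside (~: X)); last by exists w2.
  by move/eqP: n12; case; apply: (card_le1_eqP B1 w2 w1).
have [q qa qX] := notin_outside wL wnB.
by exists q; [rewrite inE in qX | apply: (ladj_act HP uL wL aw xa qa)].
Qed.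

Section Mixed.
Variable X : {set V}.
Hypotheses (HX : complete_across X) (B1 : #|outside X| <= 1) (B1' : #|outside (~: X)| <= 1).

Definition mixed u := [&& u \in L, u \notin outside X & u \notin outside (~: X)].

Lemma mixed_act u : mixed u ->
  (exists2 x, x \in act e u & x \in X) /\ (exists2 y, y \in act e u & y \notin X).
Proof.
case/and3P=> uL uB uB'; split; first exact: notin_outside.
by have [y ya] := notin_outside uL uB'; rewrite inE => yX; exists y.
Qed.

(* An active vertex of w sees both sides of X through u1, so it lies on an
   edge across X; complete adjacency across X then joins it to an active
   vertex of u2. *)
Lemma mixed_ladj u1 u2 w : mixed u1 -> mixed u2 -> w \in L -> w != u2 ->
  ladj P u1 w -> ladj P u2 w.
Proof.
move=> M1 M2 wL nw2 a1.
have u1L : u1 \in L by case/and3P: M1.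
have u2L : u2 \in L by case/and3P: M2.
have [[x1 x1a x1X] [y1 y1a y1X]] := mixed_act M1.
have [[x2 x2a x2X] [y2 y2a y2X]] := mixed_act M2.
have [q qa] := act_nonempty wL.
have qw := subsetP (act_sub e _) _ qa.
have a1' : ladj P w u1 by rewrite (ladjC e_sym HP).
have eqx1 := ladj_act HP wL u1L a1' qa x1a.
have eqy1 := ladj_act HP wL u1L a1' qa y1a.
have [qX|qX] := boolP (q \in X).
  have [h hX ehy] : exists2 h, h \in X & e h y2.
    have B1c : #|outside (~: ~: X)| <= 1 by rewrite setCK.
    have [h] := act_nbr_outside B1c u2L y2a; rewrite inE negbK => hX ey2h.
    by exists h; rewrite // e_sym.
  have [_ _ adj] := edge_ladj e_sym HP wL u2L qw (subsetP (act_sub e _) _ y2a) nw2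
    (HX qX hX y1X y2X eqy1 ehy).
  by rewrite (ladjC e_sym HP).
have [g gX exg] := act_nbr_outside B1' u2L x2a.
have ex2q : e x2 q by apply: (HX x2X x1X gX qX exg); rewrite e_sym.
have nu2w : u2 != w by rewrite eq_sym.
by have [] := edge_ladj e_sym HP u2L wL (subsetP (act_sub e _) _ x2a) qw nu2w ex2q.
Qed.
Lemma mixed_false : False.
Proof.
have : 1 < #|L :\: (outside X :|: outside (~: X))|.
  rewrite cardsD; have : #|L :&: (outside X :|: outside (~: X))| <= 2.
    apply: leq_trans (subset_leq_card (subsetIr _ _)) _.
    by apply: leq_trans (leq_card_setU _ _) _; apply: (leq_add B1 B1').
  by move: P_nontriv; rewrite /L; lia.
case/card_gt1P => u1 [u2 [M1 M2 n12]].
have mix u : u \in L :\: (outside X :|: outside (~: X)) -> mixed u.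
  by rewrite in_setD in_setU negb_or => /andP[/andP[uB uB'] uL]; apply/and3P.
have [u1L u2L] : u1 \in L /\ u2 \in L by case/setDP: M1; case/setDP: M2.
apply: (not_twins_nor_pendant u1L u2L n12); left => w wL nw1 nw2.
by apply/idP/idP; apply: mixed_ladj; rewrite ?mix.
Qed.
End Mixed.

(* If at most one vertex of P is not outside X, then X lies in a single
   vertex, and likewise for ~: X.  Otherwise primality leaves at most one
   vertex outside X and one outside ~: X, and two of the remaining, mixed,
   vertices would be twins. *)
Lemma split_in_lvert X x0 y0 : complete_across X -> x0 \in X -> y0 \notin X ->
  exists2 u, u \in L & (X \subset u) || (~: X \subset u).
Proof.
move=> HX x0X y0X.
have [A1|A2] := leqP #|L :\: outside X| 1.
  by have [u uL sub] := X_in_lvert HX y0X x0X A1; exists u; rewrite ?sub.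
have HX' := complete_acrossC HX.
have y0X' : y0 \in ~: X by rewrite inE.
have x0X' : x0 \notin ~: X by rewrite inE negbK.
have [A1'|A2'] := leqP #|L :\: outside (~: X)| 1.
  by have [u uL sub] := X_in_lvert HX' x0X' y0X' A1'; exists u; rewrite ?sub ?orbT.
exfalso; apply: (mixed_false HX).
- by rewrite leqNgt; apply/negP; apply: outside_not_split A2.
- by rewrite leqNgt; apply/negP; apply: outside_not_split A2'.
Qed.

End PrimeGraph.

(** * Cuts of a branch decomposition *)

Section BranchDecomposition.
Variables (V W : finType) (t : rel W) (delta : W -> V).
Hypothesis HT : branch_decomp t delta.

Let tsym : symmetric t. Proof. by case: HT => [[]]. Qed.
Let tirr : irreflexive t. Proof. by case: HT => [[]]. Qed.
Let tconn : forall x y, connect t x y. Proof. by case: HT => [[]]. Qed.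
Let tacyc : acyclic t. Proof. by case: HT => [[]]. Qed.

Notation tm := (t_minus t).

Lemma t_minus_sub x y u w : tm x y u w -> t u w.
Proof. by case/andP. Qed.

Lemma t_minus_sym x y : symmetric (tm x y).
Proof.
move=> u w; rewrite /t_minus tsym; congr (_ && ~~ _).
by case: (u == x); case: (w == y); case: (u == y); case: (w == x).
Qed.

Lemma t_minusC x y : tm x y =2 tm y x.
Proof.
move=> u w; rewrite /t_minus; congr (_ && ~~ _); by rewrite orbC.
Qed.

Lemma t_neq x y : t x y -> x != y.
Proof. by apply: contraTneq => ->; rewrite tirr. Qed.

Lemma t_minus_disconnects x y : t x y -> ~~ connect (tm x y) x y.
Proof.
move=> txy; apply/negP => /connectP[p pth Ey].
case: (shortenP pth) Ey => p' pth' Up' _ Ey.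
case: p' pth' Up' Ey => [|z q] /=; first by move=> _ _ E; rewrite E tirr in txy.
move=> /andP[tz pq] Uq Ey.
case: q pq Uq Ey => [|z' q'] pq Uq Ey.
  by move: tz; rewrite Ey /= /t_minus !eqxx andbF.
apply: tacyc; exists [:: x, z, z' & q']; apply/and3P; split => //.
rewrite /cycle rcons_path; apply/andP; split.
  rewrite /= (t_minus_sub tz) /=; exact: (sub_path (@t_minus_sub x y) pq).
by move: Ey; rewrite /= => <-; rewrite tsym.
Qed.

Definition t_avoid (x : W) : rel W := fun u v => [&& t u v, u != x & v != x].

Lemma t_avoid_sym x : symmetric (t_avoid x).
Proof. by move=> u v; rewrite /t_avoid tsym; case: (t v u); case: (u != x); case: (v != x). Qed.

Lemma connect_t_avoid a x w : t a x -> connect (tm a x) a w -> connect (t_avoid x) a w.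
Proof.
move=> tax /connectP[p pth ->]; apply/connectP; exists p => //.
have Pall : all [pred u | u != x] (a :: p).
  apply/allP => c cin; rewrite /=; apply: contraTneq (path_connect pth cin) => ->.
  exact: t_minus_disconnects.
apply: (sub_in_path _ Pall pth) => u v; rewrite !inE => ux vx /t_minus_sub tuv.
by rewrite /t_avoid tuv ux vx.
Qed.

Lemma t_avoid_sub x y : subrel (t_avoid x) (tm x y).
Proof.
move=> u v /and3P[tuv ux vx]; rewrite /t_minus tuv /=.
by rewrite (negbTE vx) (negbTE ux) !andbF.
Qed.

Lemma connect_t_avoid_sub x y u v : connect (t_avoid x) u v -> connect (tm x y) u v.
Proof. by apply: connect_sub => u' v' /(t_avoid_sub y)/connect1. Qed.

Lemma connect_t_minus_sym x y : connect_sym (tm x y).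
Proof. by apply: sym_connect_sym; apply: t_minus_sym. Qed.

Lemma connect_t_minus_side x y w : t x y ->
  connect (tm x y) y w = ~~ connect (tm x y) x w.
Proof.
move=> txy; apply/idP/idP => [cy|ncx].
  apply: contraNN (t_minus_disconnects txy) => cx.
  by apply: connect_trans cx _; rewrite connect_t_minus_sym.
pose a := [pred u | connect (tm x y) x u || connect (tm x y) y u].
have cl : closed t a.
  apply: intro_closed; first exact: sym_connect_sym.
  move=> u v tuv /orP ua; case tm_uv : (tm x y u v).
    by apply/orP; case: ua => h; [left|right]; apply: connect_trans h (connect1 tm_uv).
  move: tm_uv; rewrite /t_minus tuv /= => /negbFE /orP[] /andP[_ /eqP->].
    by apply/orP; right.
  by apply/orP; left.
have xa : x \in a by apply/orP; left.
by move: (closed_connect cl (tconn x w)); rewrite xa inE (negbTE ncx) => /esym.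
Qed.

Lemma leaf_of v : exists2 l, leaf t l & delta l = v.
Proof. by case: HT => _ _ _ H; apply: H. Qed.

Lemma leaf_inj l1 l2 : leaf t l1 -> leaf t l2 -> delta l1 = delta l2 -> l1 = l2.
Proof. by case: HT => _ _ H _; apply: H. Qed.

Lemma in_cut_leaf x y l : leaf t l -> (delta l \in cut t delta x y) = connect (tm x y) x l.
Proof.
move=> ll; rewrite inE; apply/existsP/idP => [[l' /and3P[ll' /eqP E c]]|c].
  by rewrite -(leaf_inj ll' ll E).
by exists l; rewrite ll eqxx c.
Qed.

Lemma cutC x y : t x y -> cut t delta y x = ~: cut t delta x y.
Proof.
move=> txy; apply/setP => v; case: (leaf_of v) => l ll <-.
by rewrite in_setC !in_cut_leaf // (eq_connect (t_minusC y x)) connect_t_minus_side.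
Qed.

Lemma leaf_nbr_eq x y z : leaf t x -> t x y -> t x z -> z = y.
Proof.
move=> /eqP d1 txy txz.
have : [set w | t x w] = [set y].
  apply/eqP; rewrite eq_sym eqEcard sub1set inE txy /= cards1; by rewrite /deg in d1; rewrite d1.
by move/setP/(_ z); rewrite !inE txz => /esym/eqP.
Qed.

Lemma cut_leaf x y : t x y -> leaf t x -> cut t delta x y = [set delta x].
Proof.
move=> txy lx; apply/setP => v; case: (leaf_of v) => l ll <-.
rewrite in_cut_leaf // inE.
apply/idP/idP => [c|/eqP E]; last by rewrite (leaf_inj ll lx E).
have cl : closed (tm x y) [pred u | u == x].
  apply: intro_closed; first exact: connect_t_minus_sym.
  move=> u w tuw /eqP Eu; move: tuw; rewrite Eu => tw.
  have := leaf_nbr_eq lx txy (t_minus_sub tw) => Ew; move: tw; rewrite Ew /t_minus !eqxx.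
  by rewrite andbF.
by have := closed_connect cl c; rewrite !inE eqxx => /esym/eqP->.
Qed.

Lemma connect_child x y x' w : t x y -> t x x' -> x' != y -> connect (tm x' x) x' w ->
  connect (tm x y) x w.
Proof.
move=> txy txx' nx'y c.
have tx'x : t x' x by rewrite tsym.
have c' := connect_t_avoid tx'x c.
apply: (@connect_trans _ _ x' x w (connect1 _)).
  rewrite /t_minus txx' /= eqxx /= (negbTE nx'y) /=.
  by rewrite (negbTE (t_neq txy)).
exact: connect_t_avoid_sub c'.
Qed.

Lemma connect_parent x y w : t x y -> connect (tm x y) x w -> w != x ->
  exists x', [/\ t x x', x' != y & connect (tm x' x) x' w].
Proof.
move=> txy /connectP[p pth Ew] nwx.
case: (shortenP pth) Ew => p' pth' Up' _ Ew.
case: p' pth' Up' Ew => [|x' q] /=; first by move=> _ _ E; rewrite E eqxx in nwx.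
move=> /andP[tx' pq] /andP[xnin Uq] Ew.
have tx'x := t_minus_sub tx'.
have nx'y : x' != y.
  by apply: contraTneq tx' => ->; rewrite /t_minus !eqxx /= andbF.
exists x'; split => //; apply/connectP; exists q => //.
have Pall : all [pred u | u != x] (x' :: q).
  by apply/allP => c cin /=; apply: contraNneq xnin => <-.
apply: (sub_in_path _ Pall pq) => u v; rewrite !inE => ux vx /t_minus_sub tuv.
by rewrite t_minusC; apply: t_avoid_sub; rewrite /t_avoid tuv ux vx.
Qed.

Lemma cut_children_disjoint x x1 x2 : t x x1 -> t x x2 -> x1 != x2 ->
  [disjoint cut t delta x1 x & cut t delta x2 x].
Proof.
move=> t1 t2 n12; apply/pred0P => v /=; apply/negP => /andP[].
case: (leaf_of v) => l ll <-; rewrite !in_cut_leaf // => c1 c2.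
have [t1' t2'] : t x1 x /\ t x2 x by split; rewrite tsym.
have csym : connect_sym (t_avoid x) by apply: sym_connect_sym; apply: t_avoid_sym.
have c12 : connect (tm x1 x) x1 x2.
  rewrite (eq_connect (t_minusC x1 x)); apply: connect_t_avoid_sub.
  by apply: connect_trans (connect_t_avoid t1' c1) _; rewrite csym; apply: connect_t_avoid.
have step : tm x1 x x2 x.
  by rewrite /t_minus t2' /= eq_sym (negbTE n12) eq_sym (negbTE (t_neq t2)).
by move/negP: (t_minus_disconnects t1'); apply; apply: connect_trans c12 (connect1 step).
Qed.

Lemma in_cut_children x y v : t x y -> ~~ leaf t x ->
  (v \in cut t delta x y) = [exists x', [&& t x x', x' != y & v \in cut t delta x' x]].
Proof.
move=> txy nl; case: (leaf_of v) => l ll <-; rewrite in_cut_leaf //.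
apply/idP/existsP => [c|[x' /and3P[txx' nx'y]]]; last first.
  by rewrite in_cut_leaf //; apply: connect_child.
have nlx : l != x by apply: contraNneq nl => <-.
case: (connect_parent txy c nlx) => x' [txx' nx'y c'].
by exists x'; rewrite txx' nx'y in_cut_leaf.
Qed.

Lemma two_children x y : t x y -> ~~ leaf t x ->
  exists x1 x2, [/\ t x x1, t x x2, x1 != y, x2 != y &
     forall x', t x x' -> x' != y -> x' = x1 \/ x' = x2].
Proof.
move=> txy nl.
have d3 : deg t x <= 3 by case: HT => _ H _ _; apply: H.
set N := [set w | t x w] in d3 *.
have yN : y \in N by rewrite inE.
have : 1 <= #|N :\ y| <= 2.
  move: d3 nl; rewrite /leaf /deg -/N (cardsD1 y N) yN; lia.
move=> /andP[c1 c2].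
case/card_gt0P: c1 => x1 x1in.
move: (x1in); rewrite !inE => /andP[nx1y tx1].
case b : [exists x2 in N :\ y, x2 != x1].
  case/existsP: b => x2 /andP[x2in n21].
  move: (x2in); rewrite !inE => /andP[nx2y tx2].
  exists x1, x2; split => // x' tx' nx'y.
  have x'in : x' \in N :\ y by rewrite !inE nx'y tx'.
  have : x' |: [set x1; x2] \subset N :\ y.
    by apply/subsetP => z /setU1P[->|/set2P[->|->]].
  move/subset_leq_card => H; move: (leq_trans H c2).
  rewrite cardsU1 cards2 eq_sym n21 !inE.
  case: (eqVneq x' x1) => [->|n1]; first by left.
  case: (eqVneq x' x2) => [->|n2]; first by right.
  by [].
exists x1, x1; split => // x' tx' nx'y; left.
apply/eqP; apply: contraFT b => n; apply/existsP; exists x'.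
by rewrite !inE nx'y tx' n.
Qed.

Definition side x y := [set w | connect (tm x y) x w].

Lemma side_gt0 x y : 0 < #|side x y|.
Proof. by apply/card_gt0P; exists x; rewrite inE connect0. Qed.

Lemma side_child_lt x y x' : t x y -> t x x' -> x' != y -> #|side x' x| < #|side x y|.
Proof.
move=> txy txx' nx'y; apply: proper_card; apply/properP; split.
  by apply/subsetP => w; rewrite !inE; apply: connect_child.
exists x; first by rewrite inE connect0.
by rewrite inE; apply: t_minus_disconnects; rewrite tsym.
Qed.

Lemma cut_children x y : t x y -> ~~ leaf t x -> exists x1 x2,
  [/\ t x1 x, t x2 x, cut t delta x y = cut t delta x1 x :|: cut t delta x2 x,
      x1 != x2 -> [disjoint cut t delta x1 x & cut t delta x2 x] &
      #|side x1 x| < #|side x y| /\ #|side x2 x| < #|side x y|].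
Proof.
move=> txy nl; have [x1 [x2 [t1 t2 n1 n2 only]]] := two_children txy nl.
exists x1, x2; split; rewrite 1?tsym //.
- apply/setP => v; rewrite (in_cut_children v txy nl) in_setU.
  apply/existsP/orP => [[x' /and3P[tx' nx' vx']]|[vx1|vx2]].
  + by case: (only x' tx' nx') => E; [left|right]; rewrite -E.
  + by exists x1; rewrite t1 n1.
  + by exists x2; rewrite t2 n2.
- exact: cut_children_disjoint.
- by split; apply: side_child_lt.
Qed.

End BranchDecomposition.

(** * The cut separating a heavy pair *)

Section HeavyPair.
Variables (V : finType) (e : rel V).
Hypothesis e_sym : symmetric e.
Variable P : lgraph V.
Hypotheses (HP : tot_graph e P) (P_prime : lprime P) (P_nontriv : 3 < #|lverts P|).
Hypothesis Gc : graph_connected e.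
Variables (W : finType) (t : rel W) (delta : W -> V).
Hypothesis HT : branch_decomp t delta.
Variable k : nat.
Hypotheses (k_pos : 0 < k) (Hwidth : sm_width_lt e t delta k).
Variables a b : {set V}.
Hypotheses (aL : a \in lverts P) (bL : b \in lverts P) (ab : ladj P a b).
Hypotheses (ha : 3 * k <= #|act e a|) (hb : 3 * k <= #|act e b|).

Notation A0 := (act e a).
Notation B0 := (act e b).
Notation L := (lverts P).
Notation cutt := (cut t delta).
Implicit Types (C Z : {set V}).

Let tsym : symmetric t. Proof. by case: HT => [[]]. Qed.

Lemma a_neq_b : a != b.
Proof. by move: ab; rewrite (ladjE HP) // => /andP[]. Qed.

Lemma act_complete x y : x \in A0 -> y \in B0 -> e x y.
Proof. by move=> xa yb; apply: (ladj_act HP aL bL ab xa yb). Qed.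

Lemma lvert_off_ab u v : u \in L -> u != a -> u != b -> v \in u -> v \notin a :|: b.
Proof.
move=> uL nua nub vu; rewrite in_setU negb_or; apply/andP; split.
  by apply: contraNN nua => va; rewrite (lvert_eq HP uL aL vu va).
by apply: contraNN nub => vb; rewrite (lvert_eq HP uL bL vu vb).
Qed.

Lemma two_lverts_off_ab : exists c d, [/\ c \in L, d \in L, c != d,
  {subset c <= [predC a :|: b]} & {subset d <= [predC a :|: b]}].
Proof.
have : 1 < #|L :\: [set a; b]|.
  rewrite cardsD; have : #|L :&: [set a; b]| <= 2.
    by apply: leq_trans (subset_leq_card (subsetIr _ _)) _; rewrite cards2 ltnS leq_b1.
  lia.
case/card_gt1P => c [d [cin din ncd]].
have off u : u \in L :\: [set a; b] -> {subset u <= [predC a :|: b]}.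
  rewrite !inE negb_or => /andP[/andP[nua nub] uL] v vu.
  by rewrite inE; apply: lvert_off_ab vu.
have [cL dL] : c \in L /\ d \in L by case/setDP: cin; case/setDP: din.
by exists c, d; split => //; apply: off.
Qed.

Lemma split_side_in_lvert C : is_split setT e C ->
  exists2 u, u \in L & (C \subset u) || (~: C \subset u).
Proof.
move=> Hs; have /and5P[_ C2 D2 _ _] := Hs.
have /card_gt0P[x0 x0C] : 0 < #|C| by apply: leq_trans C2.
have /card_gt0P[y0] : 0 < #|setT :\: C| by apply: leq_trans D2.
rewrite !inE andbT => y0C.
exact: (split_in_lvert e_sym HP P_prime P_nontriv Gc (split_complete_across Hs) x0C y0C).
Qed.

(* ~: C meets the two vertices of P off {a, b}, so it cannot lie in one
   vertex; hence C lies in one, and that one is a or b. *)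
Lemma split_in_ab_pure C : C \subset a :|: b -> is_split setT e C ->
  (A0 :&: C = set0) \/ (B0 :&: C = set0).
Proof.
move=> Cab Hs; have [u uL /orP[Cu|CCu]] := split_side_in_lvert Hs; last first.
  exfalso; have [c [d [cL dL ncd cout dout]]] := two_lverts_off_ab.
  have in_u z : z \in L -> {subset z <= [predC a :|: b]} -> z = u.
    move=> zL zout; case/set0Pn: (lvert_neq0 HP zL) => v vz.
    have vC : v \in ~: C by rewrite inE; apply: contra (zout v vz); apply: (subsetP Cab).
    exact: (lvert_eq HP zL uL vz (subsetP CCu _ vC)).
  by move/eqP: ncd; apply; rewrite (in_u c cL cout) (in_u d dL dout).
have [->|[v /setIP[vA vC]]] := set_0Vmem (A0 :&: C); [by left | right].
apply/setP => w; rewrite in_setI in_set0; apply/negbTE/negP => /andP[wB wC].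
have Ea := lvert_eq HP aL uL (subsetP (act_sub e a) _ vA) (subsetP Cu _ vC).
have Eb := lvert_eq HP bL uL (subsetP (act_sub e b) _ wB) (subsetP Cu _ wC).
by move/eqP: a_neq_b; apply; rewrite Ea Eb.
Qed.

Lemma cut_mm_lt x y : t x y -> ~~ is_split setT e (cutt x y) -> mm e (cutt x y) < k.
Proof. by move=> txy ns; have := Hwidth txy; rewrite /sm (negbTE ns). Qed.

Definition light C := (#|A0 :&: C| < k) && (#|B0 :&: C| < k).

Lemma mm_lt_light C : mm e C < k -> light C \/ light (~: C).
Proof.
move=> Hm.
have h1 : minn #|A0 :&: C| #|B0 :&: ~: C| <= mm e C.
  apply: mm_ge_complete; rewrite ?subsetIr // => s w /setIP[sA _] /setIP[wB _].
  exact: act_complete.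
have h2 : minn #|B0 :&: C| #|A0 :&: ~: C| <= mm e C.
  apply: mm_ge_complete; rewrite ?subsetIr // => s w /setIP[sB _] /setIP[wA _].
  by rewrite e_sym; apply: act_complete.
have := cardsIC A0 C; have := cardsIC B0 C; rewrite /light; lia.
Qed.

Lemma act_a_nonempty : exists x, x \in A0.
Proof. by apply/card_gt0P; apply: leq_trans ha; lia. Qed.

Lemma act_b_nonempty : exists x, x \in B0.
Proof. by apply/card_gt0P; apply: leq_trans hb; lia. Qed.

(* The active vertices of a in Ca are completely joined to the neighbours of
   Ca, those of b in Cb to the remaining neighbours of Ca :|: Cb; matching
   each of these two sides saturates the neighbourhood. *)
Lemma nbhd_union_lt Ca Cb : complete_across e Ca -> complete_across e Cb ->
  [disjoint Ca & Cb] -> B0 :&: Ca = set0 -> A0 :&: Cb = set0 ->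
  k <= #|A0 :&: Ca| -> k <= #|B0 :&: Cb| -> mm e (Ca :|: Cb) < k ->
  #|Nbhd e (Ca :|: Cb)| < k.
Proof.
move=> HCa HCb dab BCa ACb kA kB Hm.
set Z := Ca :|: Cb in Hm *; set N := Nbhd e Z.
set N1 := N :&: Nbhd e Ca; set N2 := N :\: Nbhd e Ca.
have NZ : N \subset ~: Z by apply/subsetP => w; rewrite in_Nbhd in_setC => /andP[].
have [b0 b0B] := act_b_nonempty; have [a0 a0A] := act_a_nonempty.
have b0Ca : b0 \notin Ca.
  by apply/negP => b0Ca; move/setP: BCa => /(_ b0); rewrite in_setI b0B b0Ca in_set0.
have a0Cb : a0 \notin Cb.
  by apply/negP => a0Cb; move/setP: ACb => /(_ a0); rewrite in_setI a0A a0Cb in_set0.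
have H1 s w : s \in A0 :&: Ca -> w \in N1 -> e s w.
  case/setIP=> sA sCa /setIP[_]; rewrite in_Nbhd => /andP[wCa /exists_inP[c cCa ecw]].
  exact: HCa sCa cCa b0Ca wCa (act_complete sA b0B) ecw.
have H2 s w : s \in B0 :&: Cb -> w \in N2 -> e s w.
  case/setIP=> sB sCb /setDP[]; rewrite !in_Nbhd negb_and negbK.
  case/andP=> wZ /exists_inP[z zZ ezw] /orP[wCa|/exists_inPn noCa].
    by move: wZ; rewrite in_setU wCa.
  have zCb : z \in Cb.
    by move: zZ; rewrite in_setU => /orP[/noCa|//]; rewrite ezw.
  have wCb : w \notin Cb by apply: contraNN wZ; rewrite in_setU => ->; rewrite orbT.
  by apply: HCb sCb zCb a0Cb wCb _ ezw; rewrite e_sym act_complete.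
have := mm_ge_complete2 (subset_trans (subsetIr A0 Ca) (subsetUl Ca Cb))
  (subset_trans (subsetIl N _) NZ) (subset_trans (subsetIr B0 Cb) (subsetUr Ca Cb))
  (subset_trans (subsetDl N _) NZ) H1 H2.
have dS : [disjoint A0 :&: Ca & B0 :&: Cb].
  apply/pred0P => v /=; apply/negP => /andP[/setIP[_ vCa] /setIP[_ vCb]].
  by rewrite (disjointFr dab vCa) in vCb.
have dN : [disjoint N1 & N2].
  by apply/pred0P => v /=; apply/negP => /andP[/setIP[_ vN] /setDP[_]]; rewrite vN.
move=> /(_ dS dN) hM; have eN := cardsID (Nbhd e Ca) N.
rewrite -/N1 -/N2 -/Z in hM eN; clear -Hm hM eN kA kB; lia.
Qed.

Definition heavy_cut Z :=
  [&& Z \subset a :|: b, #|A0 :&: ~: Z| < 2 * k & #|B0 :&: ~: Z| < 2 * k].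

Lemma heavy_cut_act Z : heavy_cut Z -> k < #|A0 :&: Z| /\ k < #|B0 :&: Z|.
Proof. by case/and3P=> _ hA hB; have := cardsIC A0 Z; have := cardsIC B0 Z; lia. Qed.

Lemma not_heavy_cut_split x y : t x y -> cutt x y \subset a :|: b -> ~~ heavy_cut (cutt x y) ->
  (k <= #|A0 :&: cutt x y| -> is_split setT e (cutt x y) /\ B0 :&: cutt x y = set0) /\
  (k <= #|B0 :&: cutt x y| -> is_split setT e (cutt x y) /\ A0 :&: cutt x y = set0).
Proof.
move=> /cut_mm_lt; move: (cutt x y) => C mm_lt Cab nheavy.
have Hs : ~~ light C -> is_split setT e C.
  move=> nlight; apply: contraNT nheavy => ns.
  case: (mm_lt_light (mm_lt ns)) => [lC|/andP[hA hB]]; first by rewrite lC in nlight.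
  by rewrite /heavy_cut Cab /=; apply/andP; split; lia.
have nlightA : k <= #|A0 :&: C| -> ~~ light C by rewrite /light negb_and -!leqNgt => ->.
have nlightB : k <= #|B0 :&: C| -> ~~ light C.
  by rewrite /light negb_and -!leqNgt => ->; rewrite orbT.
split=> [kA|kB].
  split; first exact/Hs/nlightA.
  case: (split_in_ab_pure Cab (Hs (nlightA kA))) => // A0C.
  by move: kA; rewrite A0C cards0 leqNgt k_pos.
split; first exact/Hs/nlightB.
case: (split_in_ab_pure Cab (Hs (nlightB kB))) => // B0C.
by move: kB; rewrite B0C cards0 leqNgt k_pos.
Qed.

(* Both children of a heavy cut being non-heavy, one of them is a split
   carrying k active vertices of a and the other a split carrying k active
   vertices of b. *)
Lemma heavy_cut_children_nbhd x y x1 x2 : t x y -> t x1 x -> t x2 x ->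
  [disjoint cutt x1 x & cutt x2 x] -> cutt x y = cutt x1 x :|: cutt x2 x ->
  heavy_cut (cutt x y) -> ~~ heavy_cut (cutt x1 x) -> ~~ heavy_cut (cutt x2 x) ->
  #|Nbhd e (cutt x y)| < k.
Proof.
move=> txy t1 t2 d12 EZ hZ nh1 nh2.
have [ZA ZB] := heavy_cut_act hZ; have /and3P[Zab _ _] := hZ.
have nsZ : ~~ is_split setT e (cutt x y).
  by apply/negP => /(split_in_ab_pure Zab)[] E; [move: ZA | move: ZB]; rewrite E cards0.
have mmZ := cut_mm_lt txy nsZ.
have [|/andP[hA hB]] := mm_lt_light mmZ; first by rewrite /light ltnNge (ltnW ZA).
have [C1ab C2ab] : cutt x1 x \subset a :|: b /\ cutt x2 x \subset a :|: b.
  by split; apply: subset_trans Zab; rewrite EZ ?subsetUl ?subsetUr.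
have [cl1A cl1B] := not_heavy_cut_split t1 C1ab nh1.
have [cl2A cl2B] := not_heavy_cut_split t2 C2ab nh2.
have eA := cardsIU_disjoint A0 d12; have eB := cardsIU_disjoint B0 d12.
rewrite -EZ in eA eB; have := cardsIC A0 (cutt x y); have := cardsIC B0 (cutt x y).
move=> cB cA; rewrite EZ in mmZ *.
have [kA1|kA1] := leqP k #|A0 :&: cutt x1 x|.
  have [s1 B1] := cl1A kA1.
  have kB2 : k <= #|B0 :&: cutt x2 x| by move: eB; rewrite B1 cards0 add0n => <-; apply: ltnW.
  have [s2 A2] := cl2B kB2.
  exact: nbhd_union_lt (split_complete_across s1) (split_complete_across s2) d12 B1 A2 kA1 kB2 mmZ.
have kA2 : k <= #|A0 :&: cutt x2 x| by clear -eA cA hA ha kA1; lia.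
have [s2 B2] := cl2A kA2.
have kB1 : k <= #|B0 :&: cutt x1 x| by move: eB; rewrite B2 cards0 addn0 => <-; apply: ltnW.
have [s1 A1] := cl1B kB1.
rewrite setUC in mmZ *; rewrite disjoint_sym in d12.
exact: nbhd_union_lt (split_complete_across s2) (split_complete_across s1) d12 B2 A1 kA2 kB1 mmZ.
Qed.

Lemma heavy_cut_descent n x y : #|side t x y| <= n -> t x y -> heavy_cut (cutt x y) ->
  exists x' y', [/\ t x' y', heavy_cut (cutt x' y') & #|Nbhd e (cutt x' y')| < k].
Proof.
elim: n x y => [|n IH] x y hn txy hZ; first by move: (side_gt0 t x y); rewrite ltnNge hn.
have [lx|nlx] := boolP (leaf t x).
  have [ZA _] := heavy_cut_act hZ; rewrite (cut_leaf HT txy lx) in ZA.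
  have : #|A0 :&: [set delta x]| <= 1 by rewrite -(cards1 (delta x)) subset_leq_card ?subsetIr.
  by move/(leq_trans ZA); rewrite ltnS leqNgt k_pos.
have [x1 [x2 [t1 t2 EZ d12 [lt1 lt2]]]] := cut_children HT txy nlx.
have [h1|nh1] := boolP (heavy_cut (cutt x1 x)); first by apply: (IH x1 x) => //; rewrite -ltnS (leq_trans lt1 hn).
have [h2|nh2] := boolP (heavy_cut (cutt x2 x)); first by apply: (IH x2 x) => //; rewrite -ltnS (leq_trans lt2 hn).
have [E12|n12] := eqVneq x1 x2; first by move: hZ; rewrite EZ -E12 setUid (negbTE nh1).
by exists x, y; split => //; apply: (heavy_cut_children_nbhd txy t1 t2 (d12 n12) EZ).
Qed.

Definition meets_off_ab C := [exists r in C, r \notin a :|: b].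

Lemma not_meets_off_ab C : ~~ meets_off_ab C -> C \subset a :|: b.
Proof. by move=> h; apply/subsetP => v vC; apply: contraR h => vn; apply/exists_inP; exists v. Qed.

(* A vertex of P other than a and b contains no active vertex of a or b. *)
Lemma light_in_lvert_off_ab C u r : u \in L -> r \in u -> r \notin a :|: b ->
  C \subset u -> light C.
Proof.
move=> uL ru rab Cu.
have no_act c : c \in L -> r \notin c -> act e c :&: C = set0.
  move=> cL rc; apply/setP => v; rewrite in_setI in_set0; apply/negbTE/negP => /andP[vc vC].
  by move: rc; rewrite (lvert_eq HP cL uL (subsetP (act_sub e c) _ vc) (subsetP Cu _ vC)) ru.
move: rab; rewrite in_setU negb_or => /andP[ra rb].
by rewrite /light (no_act a aL ra) (no_act b bL rb) cards0 k_pos.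
Qed.

Lemma light_either_side x y : t x y -> meets_off_ab (cutt x y) ->
  meets_off_ab (~: cutt x y) -> light (cutt x y) \/ light (~: cutt x y).
Proof.
move=> txy /exists_inP[r rC rn] /exists_inP[r' rC' rn'].
have [Hs|ns] := boolP (is_split setT e (cutt x y)); last exact: mm_lt_light (cut_mm_lt txy ns).
have [u uL /orP[sub|sub]] := split_side_in_lvert Hs.
  by left; apply: light_in_lvert_off_ab uL (subsetP sub _ rC) rn sub.
by right; apply: light_in_lvert_off_ab uL (subsetP sub _ rC') rn' sub.
Qed.

Definition open_cut C := meets_off_ab C && ~~ light C.

Section Children.
Variables x y x1 x2 : W.
Hypotheses (txy : t x y) (t1 : t x1 x) (t2 : t x2 x).
Hypotheses (d12 : [disjoint cutt x1 x & cutt x2 x])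
  (EZ : cutt x y = cutt x1 x :|: cutt x2 x).
Hypotheses (mZ : meets_off_ab (cutt x y)) (nlZ : ~~ light (cutt x y)).

Let eA : #|A0 :&: cutt x y| = #|A0 :&: cutt x1 x| + #|A0 :&: cutt x2 x|.
Proof. by rewrite EZ; apply: cardsIU_disjoint. Qed.

Let cA : #|A0 :&: cutt x y| + #|A0 :&: ~: cutt x y| = #|A0|.
Proof. exact: cardsIC. Qed.

Lemma heavy_cut_light_child : light (cutt x1 x) -> ~~ meets_off_ab (cutt x2 x) ->
  exists x' y', t x' y' /\ heavy_cut (cutt x' y').
Proof.
move=> /andP[l1A l1B] /not_meets_off_ab C2ab.
have eB : #|B0 :&: cutt x y| = #|B0 :&: cutt x1 x| + #|B0 :&: cutt x2 x|.
  by rewrite EZ; apply: cardsIU_disjoint.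
have cB := cardsIC B0 (cutt x y).
have [mD|/not_meets_off_ab Dab] := boolP (meets_off_ab (~: cutt x y)).
  have [lZ|/andP[lDA lDB]] := light_either_side txy mZ mD; first by move: nlZ; rewrite lZ.
  exists x2, x; split=> //; rewrite /heavy_cut C2ab /=.
  have := cardsIC A0 (cutt x2 x); have := cardsIC B0 (cutt x2 x).
  move=> c2B c2A; clear -eA cA eB cB l1A l1B lDA lDB c2A c2B; apply/andP; split; lia.
exists x, x1; split; first by rewrite tsym.
rewrite (cutC HT t1) /heavy_cut setCK; apply/and3P; split.
- apply/subsetP => v; rewrite inE => vC1; have [vZ|vD] := boolP (v \in cutt x y).
    by apply: (subsetP C2ab); move: vZ; rewrite EZ in_setU (negbTE vC1).
  by apply: (subsetP Dab); rewrite inE.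
- by apply: (leq_trans l1A); rewrite leq_pmull.
- by apply: (leq_trans l1B); rewrite leq_pmull.
Qed.

Lemma heavy_cut_light_children : light (cutt x1 x) -> light (cutt x2 x) ->
  exists x' y', t x' y' /\ heavy_cut (cutt x' y').
Proof.
move=> /andP[l1A l1B] /andP[l2A l2B].
have [mD|/not_meets_off_ab Dab] := boolP (meets_off_ab (~: cutt x y)).
  have [lZ|/andP[lDA _]] := light_either_side txy mZ mD; first by move: nlZ; rewrite lZ.
  by exfalso; clear -eA cA l1A l2A lDA ha; lia.
have eB : #|B0 :&: cutt x y| = #|B0 :&: cutt x1 x| + #|B0 :&: cutt x2 x|.
  by rewrite EZ; apply: cardsIU_disjoint.
exists y, x; split; first by rewrite tsym.
rewrite (cutC HT txy) /heavy_cut Dab setCK /=.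
by clear -eA eB l1A l1B l2A l2B; apply/andP; split; lia.
Qed.

End Children.

Lemma heavy_cut_closed_children x y x1 x2 : t x y -> t x1 x -> t x2 x ->
  [disjoint cutt x1 x & cutt x2 x] -> cutt x y = cutt x1 x :|: cutt x2 x ->
  open_cut (cutt x y) -> ~~ open_cut (cutt x1 x) -> ~~ open_cut (cutt x2 x) ->
  exists x' y', t x' y' /\ heavy_cut (cutt x' y').
Proof.
move=> txy t1 t2 d12 EZ /andP[mZ nlZ].
have d21 := d12; rewrite disjoint_sym in d21; have EZ' := EZ; rewrite setUC in EZ'.
move=> /nandP[m1|/negbNE l1] /nandP[m2|/negbNE l2].
- have Zab : cutt x y \subset a :|: b.
    by rewrite EZ subUset (not_meets_off_ab m1) (not_meets_off_ab m2).
  by case/exists_inP: mZ => r /(subsetP Zab) ->.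
- exact: heavy_cut_light_child txy t2 t1 d21 EZ' mZ nlZ l2 m1.
- exact: heavy_cut_light_child txy t1 t2 d12 EZ mZ nlZ l1 m2.
- exact: heavy_cut_light_children txy d12 EZ mZ nlZ l1 l2.
Qed.

Lemma open_cut_descent n x y : #|side t x y| <= n -> t x y -> open_cut (cutt x y) ->
  exists x' y', t x' y' /\ heavy_cut (cutt x' y').
Proof.
elim: n x y => [|n IH] x y hn txy oZ; first by move: (side_gt0 t x y); rewrite ltnNge hn.
have [lx|nlx] := boolP (leaf t x).
  move: oZ; rewrite /open_cut (cut_leaf HT txy lx) => /andP[/exists_inP[r /set1P-> rab]].
  have [u uL ru] := lvert_cover HP (delta x).
  by rewrite (light_in_lvert_off_ab uL ru rab) // sub1set.
have [x1 [x2 [t1 t2 EZ d12 [lt1 lt2]]]] := cut_children HT txy nlx.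
have [o1|no1] := boolP (open_cut (cutt x1 x)).
  by apply: (IH x1 x) => //; rewrite -ltnS (leq_trans lt1 hn).
have [o2|no2] := boolP (open_cut (cutt x2 x)).
  by apply: (IH x2 x) => //; rewrite -ltnS (leq_trans lt2 hn).
have [E12|n12] := eqVneq x1 x2; first by move: oZ; rewrite EZ -E12 setUid (negbTE no1).
exact: heavy_cut_closed_children txy t1 t2 (d12 n12) EZ oZ no1 no2.
Qed.

(* Start from the edge of T at the leaf of a vertex r of G lying in a vertex
   of P other than a and b: its cut is V(G) minus r. *)
Lemma exists_heavy_cut : exists x y, t x y /\ heavy_cut (cutt x y).
Proof.
have [c [d [cL dL ncd cout dout]]] := two_lverts_off_ab.
case/set0Pn: (lvert_neq0 HP cL) => r rc; case/set0Pn: (lvert_neq0 HP dL) => r' r'd.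
have [l ll Er] := leaf_of HT r.
have /card_gt0P[y0] : 0 < deg t l by move: ll => /eqP ->.
rewrite inE => tly0; have ty0l : t y0 l by rewrite tsym.
have Ecut : cutt y0 l = ~: [set r] by rewrite (cutC HT tly0) (cut_leaf HT tly0 ll) Er.
apply: (open_cut_descent (leqnn _) ty0l); rewrite /open_cut Ecut; apply/andP; split.
  apply/exists_inP; exists r'; last by move: (dout r' r'd); rewrite inE.
  by rewrite !inE; apply: contraNneq ncd => Er'; rewrite (lvert_eq HP cL dL rc) // -Er'.
rewrite /light negb_and -leqNgt.
have -> : A0 :&: ~: [set r] = A0.
  apply/setIidPl/subsetP => v vA; rewrite !inE; apply: contraTneq (cout r rc) => <-.
  by rewrite !inE (subsetP (act_sub e a) _ vA).
by rewrite (leq_trans _ ha) // leq_pmull.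
Qed.

Lemma heavy_cut_totinv Z : heavy_cut Z -> is_totinv P Z [set a; b].
Proof.
move=> hZ; have /and3P[Zab _ _] := hZ; have [ZA ZB] := heavy_cut_act hZ.
apply: (is_totinv_pair HP aL bL Zab).
  have /card_gt0P[v /setIP[vA vZ]] : 0 < #|A0 :&: Z| by apply: leq_ltn_trans ZA.
  by apply/set0Pn; exists v; rewrite inE vZ (subsetP (act_sub e a)).
have /card_gt0P[v /setIP[vB vZ]] : 0 < #|B0 :&: Z| by apply: leq_ltn_trans ZB.
by apply/set0Pn; exists v; rewrite inE vZ (subsetP (act_sub e b)).
Qed.

Lemma exists_cut_totinv_pair : exists x y, [/\ t x y,
  is_totinv P (cutt x y) [set a; b] & #|Nbhd e (cutt x y)| < k].
Proof.
have [x [y [txy hZ]]] := exists_heavy_cut.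
have [x' [y' [tx'y' hZ' hN]]] := heavy_cut_descent (leqnn _) txy hZ.
by exists x', y'; split=> //; apply: heavy_cut_totinv.
Qed.

End HeavyPair.

Theorem mainTheorem6 (V : finType) (e : rel V)
    (e_sym : symmetric e) (e_irr : irreflexive e)
    (k : nat) (k_pos : 0 < k)
    (D : lgraph V -> Prop) (HD : split_decomp (init_lgraph e) D)
    (P : lgraph V) (HP : D P) (P_nontriv : 3 < #|lverts P|)
    (W : finType) (t : rel W) (delta : W -> V)
    (HT : branch_decomp t delta) (Hwidth : sm_width_lt e t delta k)
    (a b : {set V}) (Hab : heavy_pair e k P a b) :
  exists x y : W, t x y /\
    is_totinv P (cut t delta x y) [set a; b] /\
    #|Nbhd e (cut t delta x y)| < k.
Proof.
case: Hab => aL bL ab ha hb.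
have [totP primeP] := split_decomp_tot_graph e_sym HD (tot_graph_init e_sym e_irr) HP.
have [Pinit|Gc] := split_decomp_init_connected e_sym HD.
  (* Then P = G, and act(a) has at most one vertex. *)
  move: aL ha; rewrite (Pinit P HP) => /imsetP[v _ ->] ha.
  have : #|act e [set v]| <= 1 by rewrite -(cards1 v) subset_leq_card ?act_sub.
  by clear -k_pos ha; lia.
have [x [y [txy Zab hN]]] := exists_cut_totinv_pair e_sym totP primeP P_nontriv Gc HT
  k_pos Hwidth aL bL ab ha hb.
by exists x, y.
Qed.
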